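(* If $c=c_1+\cdots+c_m$ is an $XY$-slope decomposition, then $c_1,\dots,c_m$ are linearly independent.
   Context: $V$ is a finite dimensional real vector space with a positive definite symmetric bilinear form $\langle\cdot,\cdot\rangle$; $\|\cdot\|_X$ is a norm with dual norm $\|v\|_Y=\max\{\langle v,w\rangle:\|w\|_X=1\}$. For nonzero $v$, $\mu_{XY}(v)=\|v\|_Y/\|v\|_X$. An expression $c=c_1+\cdots+c_m$ is an $XY$-slope decomposition if all $c_i$ are nonzero, $\langle c_i,c_j\rangle=\|c_i\|_X\|c_j\|_Y$ for all $i\le j$, and $\mu_{XY}(c_1)>\cdots>\mu_{XY}(c_m)$. *)

(* The real vector space V is modelled as a finite-dimensional
   vector space (vectType) over an arbitrary real field R. *)
From HB Require Import structures.
From mathcomp Require Import all_boot all_order all_algebra.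
Set Implicit Arguments. Unset Strict Implicit. Unset Printing Implicit Defensive.
Import Order.TTheory GRing.Theory Num.Theory.
Local Open Scope ring_scope.

Section Defs.
Variables (R : realFieldType) (V : vectType R).

Definition inner_product (ip : V -> V -> R) : Prop :=
  [/\ forall (a : R) (u v w : V), ip (a *: u + v) w = a * ip u w + ip v w,
      forall u v : V, ip u v = ip v u
    & forall v : V, v != 0 -> 0 < ip v v].

Definition is_norm (nX : V -> R) : Prop :=
  [/\ forall v : V, v != 0 -> 0 < nX v,
      forall (a : R) (v : V), nX (a *: v) = `|a| * nX v
    & forall u v : V, nX (u + v) <= nX u + nX v].

Definition is_dual_norm (ip : V -> V -> R) (nX nY : V -> R) : Prop :=
  forall v : V,
    (exists2 w : V, nX w = 1 & ip v w = nY v) /\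
    (forall w : V, nX w = 1 -> ip v w <= nY v).

Definition slope (nX nY : V -> R) (v : V) : R := nY v / nX v.

Definition slope_decomposition (ip : V -> V -> R) (nX nY : V -> R)
    (c : V) (m : nat) (cs : 'I_m -> V) : Prop :=
  [/\ c = \sum_(i < m) cs i,
      forall i : 'I_m, cs i != 0,
      forall i j : 'I_m, (i <= j)%N -> ip (cs i) (cs j) = nX (cs i) * nY (cs j)
    & forall i j : 'I_m, (i < j)%N -> slope nX nY (cs j) < slope nX nY (cs i)].
End Defs.

(* Pair the first vector c_1 with c_2 and form the functional
   L w = <w, c_1> |c_2|_X - <w, c_2> |c_1|_X.  For j >= 2 both <c_1, c_j> and
   <c_2, c_j> factor through |c_j|_Y, so L vanishes on c_2, ..., c_m and hence on
   their span, whereas L c_1 = |c_1|_X (|c_1|_Y |c_2|_X - |c_2|_Y |c_1|_X) > 0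
   because the slopes strictly decrease.  Thus c_1 is not in the span of the
   remaining vectors, which form a slope decomposition themselves, and induction
   gives linear independence. *)
From HB Require Import structures.
From mathcomp Require Import all_boot all_order all_algebra.
From mathcomp Require Import ring.
Import Order.TTheory GRing.Theory Num.Theory.
Local Open Scope ring_scope.

Section SlopeDecomposition.
Variables (R : realFieldType) (V : vectType R) (ip : V -> V -> R) (nX nY : V -> R).
Hypothesis Hip : inner_product ip.
Hypothesis HX : is_norm nX.

Lemma span_vanishing (f : V -> R) (X : seq V) :
    (forall a u v, f (a *: u + v) = a * f u + f v) ->
    {in X, forall x, f x = 0} -> {in <<X>>%VS, forall v, f v = 0}.
Proof.
move=> flin fX v /(@coord_span _ _ _ (in_tuple X)) ->.
have f0 : f 0 = 0.
  have := flin 1 0 0; rewrite scale1r addr0 mul1r.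
  by move/(canLR (addrK _)); rewrite subrr.
elim/big_ind: _ => // [u w fu fw|i _].
  by rewrite -[u]scale1r flin fu fw mulr0 addr0.
by rewrite -[_ *: _]addr0 flin f0 fX ?mulr0 ?addr0 // mem_nth.
Qed.

Definition separator (u v w : V) : R := ip w u * nX v - ip w v * nX u.

Lemma separatorDZ u v a w w' :
  separator u v (a *: w + w') = a * separator u v w + separator u v w'.
Proof. by case: Hip => lin _ _; rewrite /separator !lin; ring. Qed.

Lemma separator_eq0 u v w :
    ip u w = nX u * nY w -> ip v w = nX v * nY w -> separator u v w = 0.
Proof. by case: Hip => _ sym _ uw vw; rewrite /separator !(sym w) uw vw; ring. Qed.

Lemma separator_neq0 u v : u != 0 -> v != 0 ->
    ip u u = nX u * nY u -> ip u v = nX u * nY v ->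
    slope nX nY v < slope nX nY u -> separator u v u != 0.
Proof.
case: HX => Xpos _ _ /Xpos Xu /Xpos Xv uu uv.
rewrite /slope ltr_pdivrMr // mulrAC ltr_pdivlMr // -subr_gt0 => lt_slope.
have -> : separator u v u = nX u * (nY u * nX v - nY v * nX u).
  by rewrite /separator uu uv; ring.
by rewrite mulf_neq0 ?lt0r_neq0.
Qed.

Lemma free_slope_ordered m (cs : 'I_m -> V) :
    (forall i, cs i != 0) ->
    (forall i j : 'I_m, (i <= j)%N -> ip (cs i) (cs j) = nX (cs i) * nY (cs j)) ->
    (forall i j : 'I_m, (i < j)%N -> slope nX nY (cs j) < slope nX nY (cs i)) ->
  free [seq cs i | i : 'I_m].
Proof.
elim: m cs => [|m IH] cs cs_neq0 ip_cs slope_cs.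
  by rewrite /image_mem enum_ord0 nil_free.
rewrite /image_mem enum_ordSl /= -map_comp free_cons; apply/andP; split; last first.
  by apply: IH => [i|i j|i j] *; [apply: cs_neq0|apply: ip_cs|apply: slope_cs].
case: m {IH} cs cs_neq0 ip_cs slope_cs => [|m] cs cs_neq0 ip_cs slope_cs.
  by rewrite enum_ord0 span_nil memv0.
set u := cs ord0; set v := cs (lift ord0 ord0).
apply/negP => /(@span_vanishing _ _ (separatorDZ u v)) sep_u.
have/negP := @separator_neq0 u v (cs_neq0 ord0) (cs_neq0 (lift ord0 ord0))
  (ip_cs ord0 ord0 isT) (ip_cs ord0 (lift ord0 ord0) isT)
  (slope_cs ord0 (lift ord0 ord0) isT).
apply; apply/eqP/sep_u => // _ /mapP[j _ ->].
by apply: separator_eq0; apply: ip_cs.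
Qed.

End SlopeDecomposition.

Theorem mainTheorem13 (R : realFieldType) (V : vectType R)
    (ip : V -> V -> R) (nX nY : V -> R)
    (Hip : inner_product ip) (HX : is_norm nX) (HY : is_dual_norm ip nX nY)
    (c : V) (m : nat) (cs : 'I_m -> V) :
  slope_decomposition ip nX nY c cs ->
  free [seq cs i | i : 'I_m].
Proof. by case=> _; apply: free_slope_ordered. Qed.
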